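(* Let $P(t)=\binom{r+t}{r}-\binom{r+t-d}{r}$ and let $x\in\mathrm{Hilb}^P(\mathbb{P}^r_k)^{us}_d$. Suppose $g\in G$ satisfies $|\Delta_{g.x,d}|=\max_{h\in G}|\Delta_{h.x,d}|$ and $\lambda_{g.x,d}=(a_0,\dots,a_r)$ with $a_0\le a_1\le\cdots\le a_r$. Then for every lower-triangular matrix $l\in H=\mathrm{SL}_{r+1}(k)$ one has $\lambda_{lg.x,d}=\lambda_{g.x,d}$, and $\lambda_{g.x,d}\in\Lambda_{g.x,d}$.
   Context: Let $k$ be an algebraically closed field, $r\ge1$, $d\ge1$, $S=k[x_0,\dots,x_r]$, $S_t$ its degree-$t$ part, $M_t$ the set of degree-$t$ monomials. With $P(t)=\binom{r+t}{r}-\binom{r+t-d}{r}$, a closed point $x$ of $\mathrm{Hilb}^P(\mathbb{P}^r_k)$ is a hypersurface $V(f)$, $0\ne f\in S_d$ (up to scalar), and its $d$-th Hilbert point is $\phi_d(x)=[f]\in\mathbb{P}(S_d)$. $G=\mathrm{GL}_{r+1}(k)$ acts on $S_1=\mathrm{span}(x_0,\dots,x_r)$ by the standard representation, hence on $S$, and $g.x$ is the point of $V(g.f)$. $T_0$ is the diagonal torus of $G$, $T=T_0\cap H$; $\lambda=(a_0,\dots,a_r)\in\mathbb{Z}^{r+1}$ denotes $s\mapsto\mathrm{diag}(s^{a_0},\dots,s^{a_r})$, which multiplies $x_0^{e_0}\cdots x_r^{e_r}$ by $s^{\sum a_ie_i}$; $\Gamma(T)$ = those with $\sum a_i=0$.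 $\Vert\cdot\Vert$ is a conjugation-invariant norm on one-parameter subgroups of $G$ restricting to the Euclidean norm on $\Gamma(T_0)$. For a representation $V$, $0\ne v$, $\lambda\in\Gamma(G)$: $\mu(v,\lambda)$ is the smallest $i$ such that the $s^i$-weight component of $v$ under $\lambda$ is nonzero. $\Lambda_{x,d}$ is the set of indivisible $\lambda\in\Gamma(H)$ maximizing $\mu(\phi_d(x),\lambda)/\Vert\lambda\Vert$; $x$ is unstable ($x\in\mathrm{Hilb}^P(\mathbb{P}^r_k)^{us}_d$) if this maximum is positive. The state $\Xi_{x,d}$ is the set of monomials occurring in $f$ with nonzero coefficient, identified with exponent vectors in $\mathbb{R}^{r+1}$; $|\Delta_{x,d}|=\max_{0\ne\lambda\in\Gamma(T)}\min_{m\in\Xi_{x,d}}\langle\lambda,m\rangle/\Vert\lambda\Vert$ (standard inner product), which equals the distance from $\frac{d}{r+1}(1,\dots,1)$ to the convex hull $\Delta_{x,d}$ of $\Xi_{x,d}$. When $|\Delta_{x,d}|>0$, $\lambda_{x,d}$ denotes the unique indivisible element of $\Gamma(T)$ attaining this maximum (equivalently, the indivisible element of $\Gamma(T)$ that is a positive real multiple of $h_{x,d}-\frac{d}{r+1}(1,\dots,1)$, where $h_{x,d}$ is the point of $\Delta_{x,d}$ nearest to $\frac{d}{r+1}(1,\dots,1)$). *)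

From Stdlib Require Import ZArith Reals ClassicalEpsilon.
From HB Require Import structures.
From mathcomp Require Import all_boot all_order all_algebra.
Set Implicit Arguments. Unset Strict Implicit. Unset Printing Implicit Defensive.
Import GRing.Theory.

(* A polynomial is a formal finite sum of terms c * x^m, stored as a   *)
(* list of (coefficient, exponent vector); its coefficient at m is the *)
(* sum of the coefficients of the terms with monomial m.               *)
Section Poly.
Local Open Scope ring_scope.
Variable k : fieldType.
Variable n : nat.

Definition mono := {ffun 'I_n -> nat}.
Definition fpoly := seq (k * mono)%type.

Definition mdeg (m : mono) : nat := (\sum_(i < n) m i)%N.
Definition madd (m1 m2 : mono) : mono := [ffun i => (m1 i + m2 i)%N].
Definition mzero : mono := [ffun _ => 0%N].
Definition munit (i : 'I_n) : mono := [ffun j => nat_of_bool (j == i)].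

Definition pcoef (p : fpoly) (m : mono) : k := \sum_(t <- p | t.2 == m) t.1.
Definition pmul (p q : fpoly) : fpoly :=
  [seq (t.1 * u.1, madd t.2 u.2) | t <- p, u <- q].
Definition pone : fpoly := [:: (1, mzero)].
Definition pexp (p : fpoly) (e : nat) : fpoly := iter e (pmul p) pone.
Definition pscale (c : k) (p : fpoly) : fpoly := [seq (c * t.1, t.2) | t <- p].

Definition homog (d : nat) (p : fpoly) : Prop := all (fun t => mdeg t.2 == d) p.
Definition pnonzero (p : fpoly) : Prop := exists m, pcoef p m != 0.
Definition support (p : fpoly) : seq mono :=
  undup [seq t.2 | t <- p & pcoef p t.2 != 0].

(* GL_n acts on S_1 by the standard representation: g.x_j = sum_i g_ij x_i,
   extended to S as a k-algebra automorphism. *)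
Definition lin_form (g : 'M[k]_n) (j : 'I_n) : fpoly :=
  [seq (g i j, munit i) | i <- enum 'I_n].
Definition act_mono (g : 'M[k]_n) (m : mono) : fpoly :=
  foldr (fun j acc => pmul (pexp (lin_form g j) (m j)) acc) pone (enum 'I_n).
Definition act (g : 'M[k]_n) (p : fpoly) : fpoly :=
  flatten [seq pscale t.1 (act_mono g t.2) | t <- p].
End Poly.

Section Stab.
Variable k : fieldType.
Variable n : nat.

Definition zvec := 'I_n -> Z.
Definition zsum (a : zvec) : Z := \big[Z.add/Z0]_(i < n) a i.
Definition znontriv (a : zvec) : Prop := exists i, a i <> Z0.
Definition indivisible (a : zvec) : Prop :=
  znontriv a /\
  forall (c : Z) (b : zvec), (forall i, a i = Z.mul c (b i)) -> c = Zpos xH \/ c = Zneg xH.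

Definition znorm (a : zvec) : R :=
  sqrt (\big[Rplus/R0]_(i < n) Rsqr (IZR (a i))).

(* weight <a, m> of the monomial x^m under the diagonal 1-PS a *)
Definition wt (a : zvec) (m : mono n) : Z :=
  \big[Z.add/Z0]_(i < n) Z.mul (a i) (Z.of_nat (m i)).

(* mu(v, lambda_a) for diagonal lambda_a: the smallest weight i whose
   s^i weight component is nonzero, i.e. min of <a,m> over the state *)
Definition mu_diag (a : zvec) (p : fpoly k n) : Z :=
  match support p with
  | [::] => Z0
  | m :: s => foldr (fun m' acc => Z.min (wt a m') acc) (wt a m) s
  end.

(* A one-parameter subgroup of H = SL_n is  s |-> h diag(s^a) h^{-1}
   with h in GL_n and sum a = 0. *)
Definition Gamma_H (h : 'M[k]_n) (a : zvec) : Prop :=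
  h \in unitmx /\ zsum a = Z0.

(* mu(v, h lambda_a h^{-1}): the s^i-weight components of v under
   h lambda_a h^{-1} are h.(components of h^{-1}.v under lambda_a) *)
Definition mu_gen (p : fpoly k n) (h : 'M[k]_n) (a : zvec) : Z :=
  mu_diag a (act (invmx h) p).

(* conjugation-invariant norm: ||h lambda_a h^-1|| = ||a|| *)
Definition ratio (p : fpoly k n) (h : 'M[k]_n) (a : zvec) : R :=
  Rdiv (IZR (mu_gen p h a)) (znorm a).

Definition unstable (p : fpoly k n) : Prop :=
  exists h a, Gamma_H h a /\ znontriv a /\ Rlt R0 (ratio p h a).

Definition inLambda (p : fpoly k n) (h : 'M[k]_n) (a : zvec) : Prop :=
  Gamma_H h a /\ indivisible a /\
  forall h' a', Gamma_H h' a' -> znontriv a' -> Rle (ratio p h' a') (ratio p h a).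

Definition inGammaT (a : zvec) : Prop := zsum a = Z0 /\ znontriv a.

Definition DeltaQ (p : fpoly k n) (a : zvec) : R :=
  Rdiv (IZR (mu_diag a p)) (znorm a).

Definition DeltaAbs (p : fpoly k n) : R :=
  epsilon (inhabits R0)
    (fun M => (exists a, inGammaT a /\ DeltaQ p a = M) /\
              forall a, inGammaT a -> Rle (DeltaQ p a) M).

Definition is_lambda (p : fpoly k n) (a : zvec) : Prop :=
  Rlt R0 (DeltaAbs p) /\ inGammaT a /\ indivisible a /\ DeltaQ p a = DeltaAbs p.
End Stab.

(** Scoring a diagonal one-parameter subgroup [a] by mu/||a||, where mu is the least weight
    <a, m> of a monomial of f, the best score is the distance from the origin to the convex hull
    of the state translated by its barycenter: Cauchy-Schwarz bounds every score by the norm of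
    the nearest point h of the hull, and a positive integral multiple of h attains the bound. The
    point h is found without compactness, as the foot of least norm among the perpendiculars from
    the origin to the affine spans of the faces; it is therefore rational, and the epsilon
    defining |Delta| is a genuine maximum.

    A lower-triangular l sends x_j into the span of the x_i with i >= j, whose weights a_i >= a_j
    when a is nondecreasing; so each monomial of l.(g.f) dominates in weight some monomial of g.f
    and mu can only grow. With the maximality of |Delta_{g.x}| this forces lambda_{lg.x} =
    lambda_{g.x}. Finally h lambda_a' h^-1 scores at g.x what a' scores on the torus at
    h^-1 g.x, which is at most |Delta_{h^-1 g.x}| <= |Delta_{g.x}|. *)

From Pilot Require Import Defs.
From Stdlib Require Import ZArith Reals ClassicalEpsilon Lia.
From Stdlib Require Lra.
From HB Require Import structures.
From mathcomp Require Import all_boot all_order all_algebra.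
From mathcomp Require Import ring lra zify ssrZ boolp.
From mathcomp Require mpoly.
Set Implicit Arguments. Unset Strict Implicit. Unset Printing Implicit Defensive.
Import Order.TTheory GRing.Theory Num.Theory.
Local Open Scope ring_scope.

(** * Nearest point of a convex hull *)

Section NearestPoint.
Variables (F : realFieldType) (V : lmodType F) (dot : V -> V -> F).
Hypothesis dotDl : forall x y z, dot (x + y) z = dot x z + dot y z.
Hypothesis dotZl : forall (t : F) x z, dot (t *: x) z = t * dot x z.
Hypothesis dotC : forall x y, dot x y = dot y x.
Hypothesis dot_ge0 : forall x, 0 <= dot x x.

Lemma dotNl x z : dot (- x) z = - dot x z.
Proof. by rewrite -scaleN1r dotZl mulN1r. Qed.

Lemma dotBl x y z : dot (x - y) z = dot x z - dot y z.
Proof. by rewrite dotDl dotNl. Qed.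

Lemma dotDr x y z : dot z (x + y) = dot z x + dot z y.
Proof. by rewrite dotC dotDl !(dotC z). Qed.

Lemma dotZr (t : F) x z : dot z (t *: x) = t * dot z x.
Proof. by rewrite dotC dotZl dotC. Qed.

Lemma dotBr x y z : dot z (x - y) = dot z x - dot z y.
Proof. by rewrite dotC dotBl !(dotC z). Qed.

Lemma dot_sumr (I : Type) (r : seq I) (P : pred I) (G : I -> V) z :
  dot z (\sum_(i <- r | P i) G i) = \sum_(i <- r | P i) dot z (G i).
Proof.
apply: (big_morph (dot z)) => [x y|]; first exact: dotDr.
by have := dotZr 0 0 z; rewrite scale0r mul0r.
Qed.

Lemma dot_isotropic e x : dot e e = 0 -> dot x e = 0.
Proof.
move=> he; apply/eqP; apply: contraT => hne.
pose t := - (dot x x + 1) / (2 * dot x e).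
have := dot_ge0 (x + t *: e).
rewrite !dotDl !dotDr !dotZl !dotZr he (dotC e x) mulr0.
have -> : t * dot x e = - (dot x x + 1) / 2 by rewrite /t; field.
rewrite mulr0; have := dot_ge0 x; lra.
Qed.

Lemma cauchy_schwarz x y : dot x y ^+ 2 <= dot x x * dot y y.
Proof.
have [x0|x0] := eqVneq (dot x x) 0.
  by rewrite dotC (dot_isotropic y x0) expr0n /= x0 mul0r.
have xpos : 0 < dot x x by rewrite lt_def x0 dot_ge0.
pose t := dot x y / dot x x.
have := dot_ge0 (y - t *: x).
rewrite !dotBl !dotBr !dotZl !dotZr (dotC y x).
have -> : t * (t * dot x x) = t * dot x y by rewrite /t; field.
have -> : dot x y ^+ 2 = dot x x * (t * dot x y) by rewrite /t; field.
by move=> h; rewrite ler_wpM2l ?(ltW xpos) //; lra.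
Qed.

Section Projection.
Variables (I : eqType) (u : I -> V).

Lemma dot_span_orth (s : seq I) (c : I -> F) w :
  (forall i, i \in s -> dot w (u i) = 0) -> dot w (\sum_(j <- s) c j *: u j) = 0.
Proof.
by move=> hw; rewrite dot_sumr big1_seq // => j /andP[_ js]; rewrite dotZr hw ?mulr0.
Qed.

Lemma orthogonal_projection (s : seq I) y : uniq s ->
  exists c : I -> F, forall i, i \in s -> dot (y - \sum_(j <- s) c j *: u j) (u i) = 0.
Proof.
elim: s y => [|x s IH] y /=; first by exists (fun _ => 0).
case/andP=> xs us.
have [c1 h1] := IH y us; have [c2 h2] := IH (u x) us.
set y1 := y - _ in h1; set e := u x - _ in h2.
have ux : u x = e + \sum_(j <- s) c2 j *: u j by rewrite subrK.
have dot_ux w : (forall i, i \in s -> dot w (u i) = 0) -> dot w (u x) = dot w e.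
  by move=> hw; rewrite ux dotDr dot_span_orth ?addr0.
pose t := if dot e e == 0 then 0 else dot y1 e / dot e e.
exists (fun j => if j == x then t else c1 j - t * c2 j).
have -> : \sum_(j <- x :: s) (if j == x then t else c1 j - t * c2 j) *: u j
    = \sum_(j <- s) c1 j *: u j + t *: e.
  rewrite big_cons eqxx (eq_big_seq (fun j => c1 j *: u j - t *: (c2 j *: u j))).
    by rewrite big_split /= sumrN -scaler_sumr addrCA /e scalerBr.
  by move=> j js; case: eqP => [ejx|_]; [rewrite -ejx js in xs|rewrite scalerBl scalerA].
have orth_s i : i \in s -> dot (y - (\sum_(j <- s) c1 j *: u j + t *: e)) (u i) = 0.
  by move=> is'; rewrite opprD addrA dotBl dotZl h1 // h2 // mulr0 subr0.
move=> i; rewrite inE => /orP[/eqP ->|]; last exact: orth_s.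
rewrite (dot_ux _ orth_s) opprD addrA dotBl dotZl /t.
case: eqP => [e0|/eqP e0]; first by rewrite e0 mulr0 subr0; apply: dot_isotropic.
by rewrite -mulrA mulVf // mulr1 subrr.
Qed.
End Projection.

Lemma dot_le_of_dot_eq p y : dot p y = dot p p -> dot p p <= dot y y.
Proof.
move=> e; have := dot_ge0 (y - p).
by rewrite !dotBl !dotBr (dotC y p) e; lra.
Qed.

Lemma dot_segment_le p y t : dot p y = dot p p -> 0 <= t <= 1 ->
  dot ((1 - t) *: y + t *: p) ((1 - t) *: y + t *: p) <= dot y y.
Proof.
move=> e /andP[t0 t1]; have := dot_le_of_dot_eq e.
rewrite !dotDl !dotDr !dotZl !dotZr (dotC y p) e.
set Y := dot y y; set Q := dot p p => QY.
have : 0 <= t * (2 - t) * (Y - Q) by rewrite !mulr_ge0 //; lra.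
nra.
Qed.

Lemma dot_le_of_min_norm p v :
  (forall t, 0 < t <= 1 -> dot p p <= dot ((1 - t) *: p + t *: v) ((1 - t) *: p + t *: v)) ->
  dot p p <= dot p v.
Proof.
move=> hmin; rewrite leNgt; apply/negP => hlt.
set c := dot p v - dot p p; set D := dot (v - p) (v - p).
have c0 : c < 0 by rewrite /c; lra.
have D0 : 0 <= D by exact: dot_ge0.
pose t := - c / (D - c).
have Dc : 0 < D - c by lra.
have t0 : 0 < t by rewrite divr_gt0 // oppr_gt0.
have t1 : t <= 1 by rewrite ler_pdivrMr // mul1r; lra.
have := hmin t; rewrite t0 t1 => /(_ isT).
have -> : (1 - t) *: p + t *: v = p + t *: (v - p).
  by rewrite scalerBl scale1r scalerBr addrAC addrA.
rewrite !dotDl !dotDr !dotZl !dotZr (dotC (v - p) p) dotBr -/c -/D.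
(* the choice of [t] makes [2 c + t D] negative *)
have : (2 * c + t * D) * (D - c) = c * (D - 2 * c) by rewrite /t; field; rewrite gt_eqF.
have : c * (D - 2 * c) < 0 by nra.
nra.
Qed.

Section Hull.
Variables (I : finType) (P : I -> V).

Definition comb (A : {set I}) (c : I -> F) : V := \sum_(i in A) c i *: P i.

Definition in_hull (A : {set I}) (y : V) : Prop := exists c : I -> F,
  [/\ forall i, i \in A -> 0 <= c i, \sum_(i in A) c i = 1 & y = comb A c].

(* [p] is the foot of the perpendicular from the origin to the affine span of the [P i],
   [i \in A], and lies in their convex hull. *)
Definition hull_foot (A : {set I}) (p : V) : Prop :=
  in_hull A p /\ forall i j, i \in A -> j \in A -> dot p (P i) = dot p (P j).

Lemma dot_comb_const (A : {set I}) (c : I -> F) p K :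
  (forall i, i \in A -> dot p (P i) = K) -> \sum_(i in A) c i = 1 -> dot p (comb A c) = K.
Proof.
move=> hK hc; rewrite /comb dot_sumr (eq_bigr (fun i => c i * K)).
  by rewrite -mulr_suml hc mul1r.
by move=> i iA; rewrite dotZr hK.
Qed.

Lemma dot_hull_ge (A : {set I}) u y K :
  in_hull A y -> (forall i, i \in A -> K <= dot u (P i)) -> K <= dot u y.
Proof.
move=> [c [c0 c1 ->]] hK; rewrite /comb dot_sumr -[K]mul1r -c1 mulr_suml.
by apply: ler_sum => i iA; rewrite dotZr ler_wpM2l ?c0 ?hK.
Qed.

Lemma set_neq0_of_sum1 (A : {set I}) (c : I -> F) : \sum_(i in A) c i = 1 -> A != set0.
Proof. by apply: contra_eqN => /eqP->; rewrite big_set0 eq_sym oner_eq0. Qed.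

Lemma affine_foot (A : {set I}) i0 : i0 \in A -> exists mu : I -> F,
  \sum_(i in A) mu i = 1 /\
  forall i, i \in A -> dot (comb A mu) (P i) = dot (comb A mu) (P i0).
Proof.
move=> i0A.
have [c hc] := orthogonal_projection (fun i => P i - P i0) (P i0) (enum_uniq (mem A)).
rewrite big_enum in hc.
pose S := \sum_(i in A) c i.
pose mu i := (if i == i0 then 1 + S else 0) - c i.
have mu1 : \sum_(i in A) mu i = 1.
  rewrite sumrB (big_setD1 i0 i0A) /= eqxx big1 ?addr0 ?addrK //.
  by move=> i; rewrite !inE => /andP[/negbTE -> _].
exists mu; split=> // i1 i1A.
have -> : comb A mu = P i0 - \sum_(j in A) c j *: (P j - P i0).
  rewrite /comb (eq_bigr (fun i => (if i == i0 then 1 + S else 0) *: P i - c i *: P i));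
    last by move=> i _; rewrite scalerBl.
  rewrite sumrB (big_setD1 i0 i0A) /= eqxx big1 ?addr0; last first.
    by move=> i; rewrite !inE => /andP[/negbTE -> _]; rewrite scale0r.
  rewrite [in RHS](eq_bigr (fun j => c j *: P j - c j *: P i0)) => [|j _]; last by rewrite scalerBr.
  by rewrite sumrB -scaler_suml -/S scalerDl scale1r opprB addrA.
apply/eqP; rewrite -subr_eq0 -dotBr; apply/eqP.
by apply: hc; rewrite mem_enum.
Qed.

Lemma hull_shrink (A : {set I}) (c mu : I -> F) :
  (forall i, i \in A -> 0 <= c i) -> \sum_(i in A) c i = 1 -> \sum_(i in A) mu i = 1 ->
  (exists2 j, j \in A & mu j < 0) -> exists i t,
  [/\ i \in A, 0 <= t <= 1 & in_hull (A :\ i) ((1 - t) *: comb A c + t *: comb A mu)].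
Proof.
move=> c0 c1 mu1 [j jA muj].
pose neg := [pred i | (i \in A) && (mu i < 0)].
have negj : neg j by rewrite /= jA muj.
case: (arg_minP (fun i => c i / (c i - mu i)) negj) => i /andP[iA mui] imin.
(* [t] is the largest step keeping every coordinate nonnegative; it kills coordinate [i] *)
pose t := c i / (c i - mu i).
have ci := c0 _ iA; have den : 0 < c i - mu i by lra.
have t0 : 0 <= t by rewrite divr_ge0 // ltW.
have t1 : t <= 1 by rewrite ler_pdivrMr // mul1r; lra.
pose nu l := (1 - t) * c l + t * mu l.
have nu0 l : l \in A -> 0 <= nu l.
  move=> lA; have cl := c0 _ lA; case: (lerP 0 (mu l)) => ml.
    by rewrite addr_ge0 // mulr_ge0 //; lra.
  have dl : 0 < c l - mu l by lra.
  have : t <= c l / (c l - mu l) by apply: imin; rewrite /= lA ml.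
  by rewrite ler_pdivlMr // /nu; lra.
have nui : nu i = 0 by rewrite /nu /t; field; lra.
have nu1 : \sum_(l in A) nu l = 1 by rewrite big_split /= -!mulr_sumr c1 mu1; lra.
exists i, t; split; rewrite ?t0 ?t1 //; exists nu; split.
- by move=> l; rewrite !inE => /andP[_ lA]; exact: nu0.
- by move: nu1; rewrite (big_setD1 i iA) /= nui add0r.
- rewrite /comb [RHS](_ : _ = \sum_(l in A) nu l *: P l); last first.
    by rewrite [RHS](big_setD1 i iA) /= nui scale0r add0r.
  rewrite !scaler_sumr -big_split /=; apply: eq_bigr => l _.
  by rewrite !scalerA scalerDl.
Qed.

Lemma hull_foot_le (A : {set I}) y : in_hull A y ->
  exists B p, hull_foot B p /\ dot p p <= dot y y.
Proof.
move: {2}#|A| (leqnn #|A|) => N; elim: N A y => [|N IH] A y hA hy.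
  by case: hy => c [_ /set_neq0_of_sum1]; rewrite -card_gt0; case: #|A| hA.
case: hy => c [c0 c1 ->]; have /set0Pn[i0 i0A] := set_neq0_of_sum1 c1.
have [mu [mu1 hK]] := affine_foot i0A.
set m := comb A mu in hK *.
have mc : dot m (comb A c) = dot m m by rewrite (dot_comb_const hK c1) (dot_comb_const hK mu1).
have [/existsP[j /andP[jA muj]]|mu0] := boolP [exists j in A, mu j < 0]; last first.
  exists A, m; split; last exact: dot_le_of_dot_eq.
  split=> [|i l iA lA]; last by rewrite !hK.
  exists mu; split=> // i iA; rewrite leNgt; apply: contraNN mu0 => mui.
  by apply/existsP; exists i; rewrite iA.
have [i [t [iA t01 hz]]] := hull_shrink c0 c1 mu1 (ex_intro2 _ _ j jA muj).
have hAi : (#|A :\ i| <= N)%N by move: hA; rewrite (cardsD1 i A) iA.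
have [B [p [hB hp]]] := IH _ _ hAi hz.
by exists B, p; split=> //; apply: le_trans hp (dot_segment_le _ t01).
Qed.

Lemma hull_foot_dot (B : {set I}) p y : hull_foot B p -> in_hull B y -> dot p y = dot p p.
Proof.
move=> [[mu [_ mu1 ->]] hK] [c [_ c1 ->]].
have /set0Pn[i0 i0B] := set_neq0_of_sum1 c1.
have hK0 i : i \in B -> dot (comb B mu) (P i) = dot (comb B mu) (P i0) by move=> iB; exact: hK.
by rewrite (dot_comb_const hK0 c1) (dot_comb_const hK0 mu1).
Qed.

Lemma in_hull_setT (B : {set I}) y : in_hull B y -> in_hull setT y.
Proof.
move=> [c [c0 c1 ->]]; exists (fun i => if i \in B then c i else 0); split.
- by move=> i _; case: ifP => // /c0.
- by rewrite -c1 [RHS]big_mkcond; apply: eq_bigl => i; rewrite inE.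
- rewrite /comb [LHS]big_mkcond; apply: eq_big => [i|i _]; first by rewrite inE.
  by case: ifP => _; rewrite ?scale0r.
Qed.

Lemma hull_min_norm (i1 : I) :
  exists2 p, in_hull setT p & forall y, in_hull setT y -> dot p p <= dot y y.
Proof.
(* Every hull point is dominated by some foot, and all feet of one face have the same norm. *)
pose foot B := epsilon (inhabits (0 : V)) (hull_foot B).
have footP B p : hull_foot B p -> hull_foot B (foot B).
  by move=> hp; apply: epsilon_spec; exists p.
pose has_foot := [pred B | `[< exists p, hull_foot B p >] ].
have foot1 : has_foot [set i1].
  apply/asboolP; exists (P i1); split=> [|i j]; last by rewrite !inE => /eqP-> /eqP->.
  by exists (fun _ => 1); split; rewrite ?big_set1 /comb ?big_set1 ?scale1r.
case: (arg_minP (fun B => dot (foot B) (foot B)) foot1) => B /asboolP[p hp] Bmin.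
exists (foot B); first exact: in_hull_setT (footP _ _ hp).1.
move=> y /hull_foot_le[B' [p' [hp' p'y]]]; apply: le_trans p'y.
have hf' := footP _ _ hp'.
rewrite -(hull_foot_dot hp' hf'.1) dotC (hull_foot_dot hf' hp'.1).
by apply: Bmin; apply/asboolP; exists p'.
Qed.

Lemma nearest_point (i1 : I) :
  exists2 h, in_hull setT h & forall i, dot h h <= dot h (P i).
Proof.
have [h [lam [lam0 lam1 hlam]] hmin] := hull_min_norm i1.
exists h; first by exists lam.
move=> i; apply: dot_le_of_min_norm => t /andP[t0 t1]; apply: hmin.
exists (fun j => (1 - t) * lam j + t * (j == i)%:R); split.
- by move=> j _; rewrite addr_ge0 ?mulr_ge0 ?lam0 //; lra.
- rewrite big_split /= -!mulr_sumr lam1 (big_setD1 i) ?inE //= eqxx big1 ?addr0.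
    by rewrite !mulr1 subrK.
  by move=> j; rewrite !inE => /andP[/negbTE ->].
- rewrite /comb (eq_bigr (fun j => (1 - t) *: (lam j *: P j) + t *: ((j == i)%:R *: P j))).
    rewrite big_split /= -!scaler_sumr -/(comb setT lam) -hlam (big_setD1 i) ?inE //= eqxx.
    by rewrite scale1r big1 ?addr0 // => j; rewrite !inE => /andP[/negbTE ->]; rewrite scale0r.
  by move=> j _; rewrite !scalerA scalerDl.
Qed.
End Hull.
End NearestPoint.

(** * Weights and the ratio mu / ||a|| *)

(* With [ssrZ], [Z.add] is the ring addition of [Z]. *)
Lemma big_ZaddE (I : Type) (r : seq I) (P : pred I) (G : I -> Z) :
  \big[Z.add/Z0]_(i <- r | P i) G i = \sum_(i <- r | P i) G i.
Proof. by []. Qed.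

Definition zrat (z : Z) : rat := (int_of_Z z)%:~R.

Lemma zrat0 : zrat 0 = 0.
Proof. by rewrite /zrat !rmorph0. Qed.

Lemma zratM x y : zrat (x * y) = zrat x * zrat y.
Proof. by rewrite /zrat !rmorphM. Qed.

Lemma zrat_sum (I : Type) (r : seq I) (P : pred I) (G : I -> Z) :
  zrat (\sum_(i <- r | P i) G i) = \sum_(i <- r | P i) zrat (G i).
Proof. by rewrite /zrat !rmorph_sum. Qed.

Lemma zrat_nat m : zrat (Z.of_nat m) = m%:R.
Proof. by rewrite /zrat (_ : Z.of_nat m = Z_of_int m) // Z_of_intK. Qed.

Lemma zrat_le x y : (zrat x <= zrat y) = (x <= y).
Proof.
rewrite /zrat ler_int -subr_ge0 -rmorphB -[RHS]subr_ge0.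
by case: (y - x).
Qed.

Lemma zrat_lt x y : (zrat x < zrat y) = (x < y).
Proof. by rewrite !ltNge zrat_le. Qed.

Lemma zrat_inj : injective zrat.
Proof. by move=> x y /intr_inj /(can_inj int_of_ZK). Qed.

Section SqrtRatio.
Local Open Scope R_scope.

Lemma div_sqrt_le (x y A B : R) : 0 < A -> 0 < B -> 0 < y ->
  (0 < x -> x * x * B <= y * y * A) -> x / sqrt A <= y / sqrt B.
Proof.
move=> A0 B0 y0 hxy.
have a0 := sqrt_lt_R0 _ A0; have b0 := sqrt_lt_R0 _ B0.
have eA := sqrt_sqrt _ (Rlt_le _ _ A0); have eB := sqrt_sqrt _ (Rlt_le _ _ B0).
set a := sqrt A in a0 eA *; set b := sqrt B in b0 eB *.
have ia := Rinv_r _ (Rgt_not_eq _ _ a0); have ib := Rinv_r _ (Rgt_not_eq _ _ b0).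
have ia0 := Rinv_0_lt_compat _ a0; have ib0 := Rinv_0_lt_compat _ b0.
rewrite /Rdiv; set a' := / a in ia ia0 *; set b' := / b in ib ib0 *.
case: (Rle_or_lt x 0) => x0; first by Lra.nra.
have key : x * b <= y * a.
  have ya := Rmult_lt_0_compat _ _ y0 a0.
  apply: Rnot_lt_le => hlt; have := hxy x0; rewrite -eA -eB; Lra.nra.
apply: (Rmult_le_reg_r (a * b)); first exact: Rmult_lt_0_compat.
have -> : x * a' * (a * b) = x * b * (a * a') by Lra.lra.
have -> : y * b' * (a * b) = y * a * (b * b') by Lra.lra.
by rewrite ia ib !Rmult_1_r.
Qed.

Lemma div_sqrt_gt0 (x A : R) : 0 < A -> 0 < x / sqrt A -> 0 < x.
Proof.
move=> A0; have := Rinv_0_lt_compat _ (sqrt_lt_R0 _ A0); rewrite /Rdiv => ia0 h.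
case: (Rle_or_lt x 0) => // x0; Lra.nra.
Qed.
End SqrtRatio.

Lemma foldr_Zmin (T : eqType) (w : T -> Z) x s :
  let z := foldr (fun y acc => Z.min (w y) acc) (w x) s in
  [/\ Z.le z (w x), forall y, y \in s -> Z.le z (w y)
    & z = w x \/ exists2 y, y \in s & z = w y].
Proof.
elim: s => [|y s [IH1 IH2 IH3]] /=; first by split; [lia|by []|left].
split; [lia| |].
- by move=> y'; rewrite inE => /orP[/eqP->|/IH2]; lia.
- have [[_ ->]|[_ ->]] := Z.min_spec (w y) (foldr (fun y acc => Z.min (w y) acc) (w x) s).
    by right; exists y; rewrite ?mem_head.
  case: IH3 => [->|[y' y's ->]]; first by left.
  by right; exists y'; rewrite // inE y's orbT.
Qed.

Section Weights.
Variables (k : fieldType) (n : nat).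
Implicit Types (p q : fpoly k n) (a : zvec n) (m : mono n).

(* Plain [support] is MathComp's [0.-support] notation. *)
Lemma mem_support p m : (m \in Defs.support p) = (pcoef p m != 0).
Proof.
rewrite mem_undup; apply/mapP/idP => [[t]|pm]; first by rewrite mem_filter => /andP[? _] ->.
have [t tp /eqP tm] : exists2 t, t \in p & t.2 == m.
  apply/hasP; apply: contraNT pm => /hasPn hn.
  by rewrite /pcoef big1_seq // => t /andP[tm tp]; move: (hn t tp); rewrite tm.
by exists t; rewrite // mem_filter tp andbT tm.
Qed.

Lemma mu_diag_le a p m : m \in Defs.support p -> Z.le (mu_diag a p) (wt a m).
Proof.
rewrite /mu_diag; case: (Defs.support p) => [//|x s].
have [h1 h2 _] := foldr_Zmin (wt a) x s.
by rewrite inE => /orP[/eqP->|/h2].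
Qed.

Lemma mu_diag_attained a p : Defs.support p != [::] ->
  exists2 m, m \in Defs.support p & mu_diag a p = wt a m.
Proof.
rewrite /mu_diag; case: (Defs.support p) => [//|x s] _.
have [_ _ [->|[y ys ->]]] := foldr_Zmin (wt a) x s; first by exists x; rewrite ?mem_head.
by exists y; rewrite // inE ys orbT.
Qed.

Lemma mu_diag_nil a p : Defs.support p = [::] -> mu_diag a p = Z0.
Proof. by rewrite /mu_diag => ->. Qed.

Lemma mu_diag_eq a p q : pcoef p =1 pcoef q -> mu_diag a p = mu_diag a q.
Proof.
move=> pq; have supp m : (m \in Defs.support p) = (m \in Defs.support q).
  by rewrite !mem_support pq.
have nil_pq : (Defs.support p == [::]) = (Defs.support q == [::]).
  case: (Defs.support p) (Defs.support q) supp => [|x s] [|y t] // e.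
    by have := e y; rewrite mem_head.
  by have := e x; rewrite mem_head.
have [p0|p0] := eqVneq (Defs.support p) [::].
  by rewrite !mu_diag_nil //; apply/eqP; rewrite -nil_pq p0.
have q0 : Defs.support q != [::] by rewrite -nil_pq.
have [mp mpS ep] := mu_diag_attained a p0; have [mq mqS eq] := mu_diag_attained a q0.
apply: Z.le_antisymm; first by rewrite eq; apply: mu_diag_le; rewrite supp.
by rewrite ep; apply: mu_diag_le; rewrite -supp.
Qed.

Lemma wt_madd a m1 m2 : wt a (madd m1 m2) = wt a m1 + wt a m2.
Proof.
rewrite /wt !big_ZaddE -big_split; apply: eq_bigr => i _.
by rewrite ffunE Nat2Z.inj_add Z.mul_add_distr_l.
Qed.

Lemma wt_mzero a : wt a (mzero n) = 0.
Proof. by rewrite /wt big_ZaddE big1 // => i _; rewrite ffunE; lia. Qed.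

Lemma wt_munit a i : wt a (munit i) = a i.
Proof.
rewrite /wt big_ZaddE (bigD1 i) //= big1 => [|j /negbTE ji]; rewrite ffunE ?eqxx ?ji /=; lia.
Qed.

Definition sqnorm (a : zvec n) : Z := \sum_j a j * a j.

Lemma znorm_sqnorm a : znorm a = sqrt (IZR (sqnorm a)).
Proof.
rewrite /znorm /sqnorm (big_morph IZR plus_IZR (erefl (IZR 0))).
by congr sqrt; apply: eq_bigr => j _; rewrite mult_IZR.
Qed.

Lemma sqnorm_gt0 a : znontriv a -> Z.lt 0 (sqnorm a).
Proof.
case=> j aj; suff : (0 < sqnorm a)%R by lia.
rewrite /sqnorm (bigD1 j) //=; apply: ltr_pwDl; first by nia.
by apply: sumr_ge0 => i _; rewrite -expr2 sqr_ge0.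
Qed.

Lemma DeltaQ_le_of_mu a p q : znontriv a ->
  Z.le (mu_diag a p) (mu_diag a q) -> Rle (DeltaQ p a) (DeltaQ q a).
Proof.
move=> /sqnorm_gt0/IZR_lt/sqrt_lt_R0 a0 pq; rewrite /DeltaQ znorm_sqnorm.
by apply: Rmult_le_compat_r; [exact/Rlt_le/Rinv_0_lt_compat|exact: IZR_le].
Qed.

Lemma mu_diag_gt0 a p : znontriv a -> Rlt 0 (DeltaQ p a) -> Z.lt 0 (mu_diag a p).
Proof.
rewrite /DeltaQ znorm_sqnorm => /sqnorm_gt0/IZR_lt a0 /(div_sqrt_gt0 a0).
exact: lt_IZR.
Qed.

Lemma DeltaQ_le_of_sq p q a b : znontriv a -> znontriv b -> 0 < mu_diag b q ->
  (0 < mu_diag a p ->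
    mu_diag a p * mu_diag a p * sqnorm b <= mu_diag b q * mu_diag b q * sqnorm a) ->
  Rle (DeltaQ p a) (DeltaQ q b).
Proof.
move=> nta ntb mub hsq; rewrite /DeltaQ !znorm_sqnorm.
apply: div_sqrt_le; [exact/IZR_lt/sqnorm_gt0|exact/IZR_lt/sqnorm_gt0|apply: IZR_lt; lia|].
by move=> /lt_IZR mua; rewrite -!mult_IZR; apply/IZR_le/Z.leb_le/hsq; lia.
Qed.

Lemma DeltaQ_eq a p q : pcoef p =1 pcoef q -> DeltaQ p a = DeltaQ q a.
Proof. by move=> pq; rewrite /DeltaQ (mu_diag_eq a pq). Qed.
End Weights.

(** * A maximizing cocharacter *)

Section Maximizer.
Variable n : nat.

Definition rvdot (u v : 'rV[rat]_n) : rat := \sum_j u 0 j * v 0 j.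

Lemma rvdotDl u v w : rvdot (u + v) w = rvdot u w + rvdot v w.
Proof. by rewrite /rvdot -big_split; apply: eq_bigr => j _; rewrite !mxE mulrDl. Qed.

Lemma rvdotZl t u w : rvdot (t *: u) w = t * rvdot u w.
Proof. by rewrite /rvdot mulr_sumr; apply: eq_bigr => j _; rewrite !mxE mulrA. Qed.

Lemma rvdotZr t u w : rvdot w (t *: u) = t * rvdot w u.
Proof. by rewrite /rvdot mulr_sumr; apply: eq_bigr => j _; rewrite !mxE mulrCA. Qed.

Lemma rvdotC u v : rvdot u v = rvdot v u.
Proof. by apply: eq_bigr => j _; rewrite mulrC. Qed.

Lemma rvdot_ge0 u : 0 <= rvdot u u.
Proof. by apply: sumr_ge0 => j _; rewrite -expr2 sqr_ge0. Qed.

Definition zrow (a : zvec n) : 'rV[rat]_n := \row_j zrat (a j).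

Definition centered (m : mono n) : 'rV[rat]_n :=
  \row_j ((m j)%:R - (mdeg m)%:R / n%:R).

Lemma zrat_sqnorm a : zrat (sqnorm a) = rvdot (zrow a) (zrow a).
Proof. by rewrite zrat_sum; apply: eq_bigr => j _; rewrite zratM !mxE. Qed.

Lemma rvdot_centered a m : zsum a = Z0 -> rvdot (zrow a) (centered m) = zrat (wt a m).
Proof.
move=> a0; have suma : \sum_j a j = 0 := a0.
rewrite /rvdot; under eq_bigr => j _ do rewrite !mxE mulrBr.
rewrite sumrB -mulr_suml -zrat_sum suma zrat0 mul0r subr0.
by rewrite /wt big_ZaddE zrat_sum; apply: eq_bigr => j _; rewrite zratM zrat_nat.
Qed.

Lemma rvdot_ones_centered m : (0 < n)%N -> rvdot (const_mx 1) (centered m) = 0.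
Proof.
move=> n0; rewrite /rvdot; under eq_bigr => j _ do rewrite !mxE mul1r.
rewrite sumrB sumr_const card_ord -natr_sum -[_ *+ n]mulr_natr mulfVK ?subrr //.
by rewrite pnatr_eq0 -lt0n.
Qed.

Lemma rvdot_ratio_le u h (x y M : rat) : 0 <= x -> x <= rvdot u h -> 0 < M ->
  M * rvdot h h <= y -> x * x * rvdot (M *: h) (M *: h) <= y * y * rvdot u u.
Proof.
move=> x0 xuh M0 My; rewrite rvdotZl rvdotZr.
have := cauchy_schwarz rvdotDl rvdotZl rvdotC rvdot_ge0 u h.
have := rvdot_ge0 u; have := rvdot_ge0 h.
set U := rvdot u u; set H := rvdot h h in My *; set d := rvdot u h in xuh * => H0 U0 dUH.
have xUH : x * x <= U * H by apply: le_trans _ dUH; rewrite expr2 ler_pM.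
have MH0 : 0 <= M * H := mulr_ge0 (ltW M0) H0.
have MHy : (M * H) * (M * H) <= y * y by apply: ler_pM.
apply: le_trans (ler_wpM2r (mulr_ge0 (ltW M0) MH0) xUH) _.
have -> : U * H * (M * (M * H)) = U * ((M * H) * (M * H)) by ring.
by rewrite [y * y * U]mulrC ler_wpM2l.
Qed.

Lemma integral_multiple h : 0 < rvdot h h -> \sum_j h 0 j = 0 ->
  exists M, exists2 b, 0 < M & inGammaT b /\ zrow b = M *: h.
Proof.
move=> hpos sum_h; pose d j := denq (h 0 j).
pose b j := Z_of_int (numq (h 0 j) * \prod_(i | i != j) d i).
have M0 : 0 < (\prod_j d j)%:~R :> rat by rewrite ltr0z prodr_gt0 // => j _; exact: denq_gt0.
have hb j : zrat (b j) = (\prod_j d j)%:~R * h 0 j.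
  by rewrite /zrat Z_of_intK rmorphM /= numqE [in RHS](bigD1 j) //= rmorphM /=; ring.
exists (\prod_j d j)%:~R, b => //; split; last by apply/rowP => j; rewrite !mxE hb.
split.
  apply: zrat_inj; rewrite zrat0 /zsum big_ZaddE zrat_sum (eq_bigr _ (fun j _ => hb j)).
  by rewrite -mulr_sumr sum_h mulr0.
have [j hj] : exists j, h 0 j != 0.
  apply/existsP; apply: contraTT hpos => /existsPn h0.
  by rewrite /rvdot big1 ?ltxx // => j _; rewrite (eqP (negPn (h0 j))) mul0r.
exists j => bj; move: (hb j); rewrite bj zrat0 => /esym/eqP.
by rewrite mulf_eq0 (gt_eqF M0) (negbTE hj).
Qed.
End Maximizer.
Arguments rvdotDl {n}.
Arguments rvdotZl {n}.
Arguments rvdotC {n}.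
Arguments rvdot_ge0 {n}.

Section DeltaMax.
Variables (k : fieldType) (n : nat) (p : fpoly k n).

Let S := Defs.support p.
Let vertex (i : 'I_(size S)) : 'rV[rat]_n := centered (nth (mzero n) S i).

Lemma mu_diag_le_hull a h : in_hull vertex setT h -> zsum a = Z0 ->
  zrat (mu_diag a p) <= rvdot (zrow a) h.
Proof.
move=> hh a0; apply: (dot_hull_ge rvdotDl rvdotZl rvdotC hh) => i _.
by rewrite rvdot_centered // zrat_le; apply/Z.leb_le/mu_diag_le/mem_nth.
Qed.

Lemma DeltaQ_maximizer : (exists2 a0, inGammaT a0 & Rlt 0 (DeltaQ p a0)) ->
  exists2 b, inGammaT b & forall a, inGammaT a -> Rle (DeltaQ p a) (DeltaQ p b).
Proof.
move=> [a0 [a00 nt0] /(mu_diag_gt0 nt0) mu0].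
have n0 : (0 < n)%N by case: nt0 => i _; apply: leq_ltn_trans (ltn_ord i).
have Sp : Defs.support p != [::].
  by apply/eqP => /(mu_diag_nil a0) e; move: mu0; rewrite e.
have S0 : (0 < size S)%N by rewrite lt0n size_eq0.
have [h hh hnear] := nearest_point rvdotDl rvdotZl rvdotC rvdot_ge0 vertex (Ordinal S0).
have hpos : 0 < rvdot h h.
  have : 0 < rvdot (zrow a0) h.
    by apply: lt_le_trans (mu_diag_le_hull hh a00); rewrite -zrat0 zrat_lt; lia.
  have := cauchy_schwarz rvdotDl rvdotZl rvdotC rvdot_ge0 (zrow a0) h.
  by have := rvdot_ge0 (zrow a0); nra.
have sum_h : \sum_j h 0 j = 0.
  have -> : \sum_j h 0 j = rvdot (const_mx 1) h by apply: eq_bigr => j _; rewrite mxE mul1r.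
  case: hh => c [_ c1 ->]; apply: (dot_comb_const rvdotDl rvdotZl rvdotC _ c1) => i _.
  exact: rvdot_ones_centered.
have [M [b M0 [[b0 ntb] bh]]] := integral_multiple hpos sum_h.
have mub : M * rvdot h h <= zrat (mu_diag b p).
  have [m mS ->] := mu_diag_attained b Sp.
  have mi : (index m S < size S)%N by rewrite index_mem.
  have -> : m = nth (mzero n) S (Ordinal mi) by rewrite /= nth_index.
  by rewrite -rvdot_centered // bh rvdotZl ler_wpM2l ?(ltW M0) // (hnear (Ordinal mi)).
exists b => // a [a_0 nta]; apply: DeltaQ_le_of_sq => //.
  by rewrite -zrat_lt zrat0; apply: lt_le_trans mub; rewrite mulr_gt0.
move=> mua; rewrite -zrat_le !zratM !zrat_sqnorm bh; apply: rvdot_ratio_le => //.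
- by rewrite -zrat0 zrat_le ltW.
- exact: mu_diag_le_hull.
Qed.

End DeltaMax.

Section DeltaAbs.
Variables (k : fieldType) (n : nat).
Implicit Types (p : fpoly k n) (a : zvec n).

Lemma DeltaQ_le_DeltaAbs p a :
  inGammaT a -> Rlt 0 (DeltaQ p a) -> Rle (DeltaQ p a) (DeltaAbs p).
Proof.
(* [DeltaAbs] is an [epsilon]: it is the maximum only because one exists. *)
move=> ga Da; have [b gb bmax] := DeltaQ_maximizer (ex_intro2 _ _ a ga Da).
pose P M := (exists a, inGammaT a /\ DeltaQ p a = M) /\
  forall a, inGammaT a -> Rle (DeltaQ p a) M.
have [_ ub] : P (DeltaAbs p).
  by apply: (epsilon_spec (inhabits R0) P); exists (DeltaQ p b); split=> //; exists b.
exact: ub.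
Qed.

Lemma DeltaQ_le_of_DeltaAbs p a M : inGammaT a -> Rle 0 M -> Rle (DeltaAbs p) M ->
  Rle (DeltaQ p a) M.
Proof.
move=> ga M0 DM; case: (Rle_or_lt (DeltaQ p a) 0) => Da; first exact: Rle_trans Da M0.
exact: Rle_trans (DeltaQ_le_DeltaAbs ga Da) DM.
Qed.
End DeltaAbs.

(** * Lower-triangular changes of coordinates *)

Section Action.
Import mpoly.
Variables (k : fieldType) (n : nat).
Implicit Types (p q : fpoly k n) (g : 'M[k]_n) (m : mono n).

Definition mnm_of m : 'X_{1..n} := [multinom m i | i < n].

Lemma mnm_of_inj : injective mnm_of.
Proof. by move=> m1 m2 /mnmP e; apply/ffunP => i; have := e i; rewrite !mnmE. Qed.

Definition mpoly_of p : {mpoly k[n]} := \sum_(t <- p) t.1 *: 'X_[mnm_of t.2].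

Lemma pcoef_mpoly p m : pcoef p m = (mpoly_of p)@_(mnm_of m).
Proof.
rewrite /pcoef /mpoly_of raddf_sum /= big_mkcond /=; apply: eq_bigr => t _.
rewrite mcoeffZ mcoeffX (inj_eq mnm_of_inj).
by case: eqP; rewrite ?mulr1 ?mulr0.
Qed.

Lemma pcoef_eq p q : mpoly_of p = mpoly_of q -> pcoef p =1 pcoef q.
Proof. by move=> pq m; rewrite !pcoef_mpoly pq. Qed.

Lemma mpoly_of_pmul p q : mpoly_of (pmul p q) = mpoly_of p * mpoly_of q.
Proof.
rewrite /mpoly_of big_allpairs_dep /= mulr_suml; apply: eq_bigr => t _.
rewrite mulr_sumr; apply: eq_bigr => u _.
rewrite (_ : mnm_of (madd t.2 u.2) = (mnm_of t.2 + mnm_of u.2)%MM); last first.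
  by apply/mnmP => i; rewrite mnmDE !mnmE ffunE.
by rewrite mpolyXD -scalerAl -scalerAr scalerA.
Qed.

Lemma mpoly_of_pone : mpoly_of (pone k n) = 1.
Proof.
rewrite /mpoly_of big_seq1 scale1r (_ : mnm_of (mzero n) = 0%MM) ?mpolyX0 //.
by apply/mnmP => i; rewrite mnmE mnm0E ffunE.
Qed.

Lemma mpoly_of_pexp p e : mpoly_of (pexp p e) = mpoly_of p ^+ e.
Proof. by elim: e => [|e IH]; rewrite ?mpoly_of_pone // exprS /= mpoly_of_pmul IH. Qed.

Definition lin_tuple g : n.-tuple {mpoly k[n]} := [tuple \sum_i g i j *: 'X_i | j < n].

Lemma mpoly_of_act_mono g m : mpoly_of (act_mono g m) = 'X_[mnm_of m] \mPo lin_tuple g.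
Proof.
rewrite comp_mpolyX /act_mono -big_enum /=.
elim: (enum 'I_n) => [|j s IH]; first by rewrite big_nil mpoly_of_pone.
rewrite big_cons /= mpoly_of_pmul IH mpoly_of_pexp tnth_mktuple mnmE; congr (_ ^+ _ * _).
rewrite /mpoly_of /lin_form big_map big_enum; apply: eq_bigr => i _ /=.
by rewrite (_ : mnm_of (munit i) = U_(i)%MM) //; apply/mnmP => l; rewrite mnmE mnm1E ffunE eq_sym.
Qed.

Lemma mpoly_of_act g p : mpoly_of (act g p) = mpoly_of p \mPo lin_tuple g.
Proof.
elim: p => [|t p IH]; first by rewrite /mpoly_of big_nil raddf0.
rewrite /act /= /mpoly_of big_cat big_cons /= -!/(mpoly_of _) -/(act g p) IH raddfD /=.
rewrite comp_mpolyZ -mpoly_of_act_mono /mpoly_of /pscale big_map scaler_sumr.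
by congr (_ + _); apply: eq_bigr => u _; rewrite scalerA.
Qed.

Lemma comp_lin_tuple (P : {mpoly k[n]}) A B :
  (P \mPo lin_tuple B) \mPo lin_tuple A = P \mPo lin_tuple (A *m B).
Proof.
rewrite [P \mPo lin_tuple B]comp_mpolyEX [P \mPo lin_tuple (A *m B)]comp_mpolyEX raddf_sum /=.
apply: eq_bigr => m _; rewrite comp_mpolyZ !comp_mpolyX rmorph_prod /=; congr (_ *: _).
apply: eq_bigr => i _; rewrite rmorphXn /= !tnth_mktuple raddf_sum /=; congr (_ ^+ _).
under eq_bigr => l _ do rewrite comp_mpolyZ comp_mpolyXU -tnth_nth tnth_mktuple scaler_sumr.
rewrite exchange_big /=; apply: eq_bigr => j _; rewrite mxE scaler_suml.
by apply: eq_bigr => l _; rewrite scalerA mulrC.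
Qed.

Lemma pcoef_act_mul A B p : pcoef (act A (act B p)) =1 pcoef (act (A *m B) p).
Proof. by apply: pcoef_eq; rewrite !mpoly_of_act comp_lin_tuple. Qed.

Lemma pcoef_act1 p : pcoef (act 1%:M p) =1 pcoef p.
Proof.
apply: pcoef_eq; rewrite mpoly_of_act -[RHS](comp_mpoly_id (mpoly_of p)); congr comp_mpoly.
apply: eq_from_tnth => j; rewrite !tnth_mktuple (bigD1 j) //= mxE eqxx scale1r.
by rewrite big1 ?addr0 // => i /negbTE ij; rewrite mxE ij scale0r.
Qed.

Lemma mnm_of_onto (x : 'X_{1..n}) : exists m, x = mnm_of m.
Proof. by exists [ffun i => x i]; apply/mnmP => i; rewrite mnmE ffunE. Qed.

Lemma pcoef_act_congr g p q : pcoef p =1 pcoef q -> pcoef (act g p) =1 pcoef (act g q).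
Proof.
move=> pq; apply: pcoef_eq; rewrite !mpoly_of_act; congr comp_mpoly.
by apply/mpolyP => x; have [m ->] := mnm_of_onto x; rewrite -!pcoef_mpoly pq.
Qed.
End Action.

Section LowerTriangular.
Import mpoly.
Variables (k : fieldType) (n : nat) (a : zvec n).
Implicit Types (p q : fpoly k n) (m : mono n).

Definition lower_triangular (l : 'M[k]_n) := forall i j : 'I_n, (i < j)%N -> l i j = 0.
Definition nondecreasing_weights := forall i j : 'I_n, (i <= j)%N -> Z.le (a i) (a j).

Definition weights_ge (w : Z) p := all (fun t => (t.1 == 0) || Z.leb w (wt a t.2)) p.

Lemma weights_ge_pcoef w p m : weights_ge w p -> pcoef p m != 0 -> Z.le w (wt a m).
Proof.
move=> /allP hp pm; apply/Z.leb_le; apply: contraTT pm => /negPf hw.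
rewrite negbK; apply/eqP; rewrite /pcoef big1_seq //.
by move=> t /andP[/eqP tm /hp]; rewrite tm hw orbF => /eqP.
Qed.

Lemma weights_ge_pmul w1 w2 p q :
  weights_ge w1 p -> weights_ge w2 q -> weights_ge (w1 + w2) (pmul p q).
Proof.
move=> /allP hp /allP hq; apply/allP => _ /allpairsP[[t u] [/= /hp ht /hq hu ->]] /=.
case/orP: ht => [/eqP->|/Z.leb_le ht]; first by rewrite mul0r eqxx.
case/orP: hu => [/eqP->|/Z.leb_le hu]; first by rewrite mulr0 eqxx.
by rewrite wt_madd; apply/orP; right; apply/Z.leb_le; exact: Z.add_le_mono.
Qed.

Lemma weights_ge_pone : weights_ge 0 (pone k n).
Proof. by rewrite /weights_ge /= wt_mzero orbT. Qed.

Lemma weights_ge_le w w' p : Z.le w' w -> weights_ge w p -> weights_ge w' p.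
Proof.
move=> ww /allP hp; apply/allP => t /hp /orP[->//|/Z.leb_le tw].
by apply/orP; right; apply/Z.leb_le; lia.
Qed.

Lemma weights_ge_pexp w p e : weights_ge w p -> weights_ge (w * Z.of_nat e) (pexp p e).
Proof.
move=> hp; elim: e => [|e IH]; first by rewrite Z.mul_0_r; exact: weights_ge_pone.
by apply: weights_ge_le (weights_ge_pmul hp IH); lia.
Qed.

Lemma weights_ge_act_mono l m : lower_triangular l -> nondecreasing_weights ->
  weights_ge (wt a m) (act_mono l m).
Proof.
(* [l] maps [x_j] to a combination of the [x_i] with [i >= j], of weight [a i >= a j]. *)
move=> hl ha; rewrite /act_mono /wt big_ZaddE -big_enum /=.
elim: (enum 'I_n) => [|j s IH]; first by rewrite big_nil; exact: weights_ge_pone.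
rewrite big_cons /=; apply: weights_ge_pmul IH; apply: weights_ge_pexp.
apply/allP => _ /mapP[i _ ->] /=; rewrite wt_munit.
by case: (ltnP i j) => ij; [rewrite hl // eqxx|apply/orP; right; apply/Z.leb_le/ha].
Qed.

Lemma act_lower_wt l p m' : lower_triangular l -> nondecreasing_weights ->
  pcoef (act l p) m' != 0 -> exists2 m, pcoef p m != 0 & Z.le (wt a m) (wt a m').
Proof.
move=> hl ha; rewrite pcoef_mpoly mpoly_of_act comp_mpolyEX raddf_sum /=.
apply: contraNP => hnot; rewrite big1 // => x _.
have [m ->] := mnm_of_onto x; rewrite mcoeffZ -mpoly_of_act_mono -!pcoef_mpoly.
have [->|pm] := eqVneq (pcoef p m) 0; first by rewrite mul0r.
have [->|cm] := eqVneq (pcoef (act_mono l m) m') 0; first by rewrite mulr0.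
by case: hnot; exists m => //; apply: weights_ge_pcoef (weights_ge_act_mono m hl ha) cm.
Qed.

Lemma mu_diag_act_lower l p : l \in unitmx -> lower_triangular l -> nondecreasing_weights ->
  Z.le (mu_diag a p) (mu_diag a (act l p)).
Proof.
move=> lu hl ha; have [lp0|lp0] := eqVneq (Defs.support (act l p)) [::].
  have lp_nil : pcoef (act l p) =1 pcoef [::].
    by move=> m; apply/eqP; rewrite /pcoef big_nil -[_ == _]negbK -mem_support lp0.
  have p_nil : pcoef p =1 pcoef [::].
    move=> m; rewrite -pcoef_act1 -(mulVmx lu) -pcoef_act_mul (pcoef_act_congr _ lp_nil).
    by rewrite /act /= /pcoef !big_nil.
  by rewrite (mu_diag_eq a p_nil) (mu_diag_eq a lp_nil).
have [m' m'S ->] := mu_diag_attained a lp0; rewrite mem_support in m'S.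
have [m pm wm] := act_lower_wt hl ha m'S.
by apply: Z.le_trans wm; apply: mu_diag_le; rewrite mem_support.
Qed.
End LowerTriangular.

Section Lambda.
Variables (k : fieldType) (n : nat).
Implicit Types (p q : fpoly k n) (a : zvec n).

Lemma DeltaAbs_eq p q : pcoef p =1 pcoef q -> DeltaAbs p = DeltaAbs q.
Proof. by move=> pq; rewrite /DeltaAbs (funext (fun a => DeltaQ_eq a pq)). Qed.

Lemma is_lambda_transfer p q a : is_lambda p a ->
  Rle (DeltaAbs q) (DeltaAbs p) -> Rle (DeltaQ p a) (DeltaQ q a) -> is_lambda q a.
Proof.
move=> [Dp [ga [inda Da]]] Dqp Dpq.
have Dq : Rlt 0 (DeltaQ q a) by rewrite -Da in Dp; exact: Rlt_le_trans Dp Dpq.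
have Dqq := DeltaQ_le_DeltaAbs ga Dq.
split; first exact: Rlt_le_trans Dq Dqq.
do 2!split=> //; apply: Rle_antisym Dqq (Rle_trans _ _ _ Dqp _).
by rewrite -Da.
Qed.

Lemma inLambda_one p a : is_lambda p a ->
  (forall h, h \in unitmx -> Rle (DeltaAbs (act h p)) (DeltaAbs p)) -> inLambda p 1%:M a.
Proof.
move=> [Dp [[a0 nta] [inda Da]]] hmax; split; first by split; [exact: unitmx1|].
split=> // h a' [hu a'0] nta'.
have -> : Defs.ratio p 1%:M a = DeltaQ p a.
  by rewrite /Defs.ratio /mu_gen (@invmx1 k n) (mu_diag_eq a (pcoef_act1 p)).
rewrite Da; apply: DeltaQ_le_of_DeltaAbs; [by []|exact: Rlt_le|].
by apply: hmax; rewrite unitmx_inv.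
Qed.
End Lambda.

Theorem lemma3p2 (k : closedFieldType) (r d : nat) (hr : (1 <= r)%N) (hd : (1 <= d)%N)
  (f : fpoly k r.+1) (hf_hom : homog d f) (hf0 : pnonzero f) (hus : unstable f)
  (g : 'M[k]_r.+1) (hg : g \in unitmx)
  (hmax : forall h : 'M[k]_r.+1, h \in unitmx ->
            Rle (DeltaAbs (act h f)) (DeltaAbs (act g f)))
  (a : zvec r.+1) (ha : is_lambda (act g f) a)
  (hsorted : forall i j : 'I_r.+1, (i <= j)%N -> Z.le (a i) (a j)) :
  (forall l : 'M[k]_r.+1, \det l = 1 ->
     (forall i j : 'I_r.+1, (i < j)%N -> l i j = 0) ->
     is_lambda (act (l *m g) f) a)
  /\ inLambda (act g f) 1%:M a.
Proof.
have [_ [[_ nta] _]] := ha.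
split=> [l detl lowl|].
  have lu : l \in unitmx by rewrite unitmxE detl unitr1.
  apply: (is_lambda_transfer ha); first by apply: hmax; rewrite unitmx_mul lu hg.
  rewrite -(DeltaQ_eq a (pcoef_act_mul l g f)).
  exact: DeltaQ_le_of_mu nta (mu_diag_act_lower lu lowl hsorted).
apply: (inLambda_one ha) => h hu; rewrite (DeltaAbs_eq (pcoef_act_mul h g f)).
by apply: hmax; rewrite unitmx_mul hu hg.
Qed.
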